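(* Let $P,Q$ be strings of the same positive length $p$, let $n$ be a positive integer, and let $d=\lfloor n/p\rfloor$ and $r=n\bmod p$. Let $X=P^*[0..n)$ and $Y=Q^*[0..n)$. Then \[ \mathrm{ED}(X,Y)\le \mathrm{ED}(P[0..r),Q[0..r))+\min_{s\in\mathbb Z}\big(d\cdot\mathrm{ED}(P,Q^{\circlearrowright s})+2|s|\big)\le 3\,\mathrm{ED}(X,Y). \]
   Context: $\mathrm{ED}$ is edit distance. $Z[i..j)$ denotes $Z[i]\cdots Z[j-1]$. For a string $Q$, $Q^*$ is the infinite string $QQQ\cdots$. For an integer $s$, the cyclic rotation $Q^{\circlearrowright s}$ is the string of length $|Q|$ with $Q^{\circlearrowright s}[i]=Q[(i+s)\bmod |Q|]$. *)

From mathcomp Require Import all_boot all_order all_algebra.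
Set Implicit Arguments. Unset Strict Implicit. Unset Printing Implicit Defensive.

Fixpoint ED (T : eqType) (s t : seq T) {struct s} : nat :=
  match s with
  | [::] => size t
  | a :: s' =>
    let fix ED_aux (t : seq T) : nat :=
      match t with
      | [::] => size s
      | b :: t' =>
          minn (minn (ED s' t).+1 (ED_aux t').+1) (ED s' t' + (a != b))
      end
    in ED_aux t
  end.

(* Q^*[0..n) : the length-n prefix of the infinite string Q Q Q ... *)
Definition inf_prefix (T : eqType) (Q : seq T) (n : nat) : seq T :=
  take n (flatten (nseq n.+1 Q)).

(* Cyclic rotation Q^{rot s} for an integer s: Q^{rot s}[i] = Q[(i+s) mod |Q|].
   seq's [rot k Q] = drop k Q ++ take k Q, i.e. [rot k Q]`_i = Q`_((i+k) mod |Q|)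
   for 0 <= k < |Q|. *)
Definition crot (T : eqType) (Q : seq T) (s : int) : seq T :=
  rot `|(s %% (size Q)%:Z)%Z|%N Q.

From mathcomp Require Import all_boot all_order all_algebra zify.
From Stdlib Require Import Classical.

Import Order.TTheory GRing.Theory.

(* Write X = P^d P[0..r) and Y = Q^d Q[0..r), and let p = |P|.  For the upper
   bound, (Q^{rot s})^d arises from Q^d by moving k = s mod p letters from one
   end to the other, at cost 2 min(k, p - k) <= 2|s|.  For the lower bound, an
   optimal alignment of X with Y cuts Y into d factors of Q^* matched with the
   copies of P, and a tail matched with P[0..r).  If the j-th factor starts at
   y_j, it differs from Q^{rot s_j}, s_j = y_j - j p, by at most its length
   defect, and the length defects also bound the drifts s_{j+1} - s_j.  Taking
   j whose rotation is at most as costly as the average, and paying |s_j| with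
   the drifts on either side of j, gives the factor 3. *)

Set Implicit Arguments.
Unset Strict Implicit.
Unset Printing Implicit Defensive.

Section Alignment.
Variable T : eqType.
Implicit Types (a b : T) (s t u : seq T).

Inductive align : seq T -> seq T -> nat -> Prop :=
| align_nil : align [::] [::] 0
| align_del a s t k : align s t k -> align (a :: s) t k.+1
| align_ins b s t k : align s t k -> align s (b :: t) k.+1
| align_sub a b s t k : align s t k -> align (a :: s) (b :: t) (k + (a != b)).

Arguments align_del a {s t k}.
Arguments align_ins b {s t k}.
Arguments align_sub a b {s t k}.

Lemma align_nil_l t : align [::] t (size t).
Proof. by elim: t => [|b t IH]; [exact: align_nil | exact: align_ins]. Qed.

Lemma align_nil_r s : align s [::] (size s).
Proof. by elim: s => [|a s IH]; [exact: align_nil | exact: align_del]. Qed.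

Lemma align_ED s t : align s t (ED s t).
Proof.
elim: s t => [|a s IHs] t; first exact: align_nil_l.
elim: t => [|b t IHt]; first exact: align_nil_r.
have del := align_del a (IHs (b :: t)); have ins := align_ins b IHt.
have sub := align_sub a b (IHs t).
by rewrite /= /minn; case: ifP => _; [case: ifP|].
Qed.

Lemma EDs0 s : ED s [::] = size s.
Proof. by case: s. Qed.

Lemma ED_le_align s t k : align s t k -> ED s t <= k.
Proof.
have ED_cons a b s' t' : ED (a :: s') (b :: t') =
    minn (minn (ED s' (b :: t')).+1 (ED (a :: s') t').+1) (ED s' t' + (a != b)) by [].
elim=> // [a s' t' k' _|b s' t' k' _|a b s' t' k' _] IH.
- by case: t' IH => [|b t'] IH; rewrite ?ED_cons ?EDs0 /= in IH *; lia.
- by case: s' IH => [|a s'] IH; rewrite ?ED_cons /= in IH *; lia.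
- by rewrite ED_cons; lia.
Qed.

Lemma align_size s t k : align s t k -> size s <= size t + k /\ size t <= size s + k.
Proof. by elim => //= *; lia. Qed.

Lemma align_cat s1 t1 k1 s2 t2 k2 :
  align s1 t1 k1 -> align s2 t2 k2 -> align (s1 ++ s2) (t1 ++ t2) (k1 + k2).
Proof.
move=> A1 A2; elim: A1 => //= [a s t k _ IH|b s t k _ IH|a b s t k _ IH].
- by rewrite addSn; exact: align_del.
- by rewrite addSn; exact: align_ins.
- by rewrite addnAC; exact: align_sub.
Qed.

Lemma align_sym s t k : align s t k -> align t s k.
Proof.
elim=> [|a *|b *|a b *]; [exact: align_nil|exact: align_ins|exact: align_del|].
by rewrite eq_sym; exact: align_sub.
Qed.

Lemma align_refl s : align s s 0.
Proof.
elim: s => [|a s IH]; first exact: align_nil.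
by have := align_sub a a IH; rewrite eqxx addn0.
Qed.

Lemma align_split s1 s2 t k : align (s1 ++ s2) t k -> exists j k1 k2,
  [/\ j <= size t, align s1 (take j t) k1, align s2 (drop j t) k2 & k1 + k2 = k].
Proof.
move Es : (s1 ++ s2) => s A.
elim: A s1 Es => [|a s' t' k' A IH|b s' t' k' _ IH|a b s' t' k' A IH] s1.
- by case: s1 => //= ->; exists 0, 0, 0; split => //; exact: align_nil.
- case: s1 => [/= ->|a' s1 [-> /IH [j [k1 [k2 [le_j A1 A2 <-]]]]]].
    exists 0, 0, k'.+1; rewrite take0 drop0.
    by split => //; [exact: align_nil | exact: align_del].
  by exists j, k1.+1, k2; split => //; exact: align_del.
- move=> /IH [j [k1 [k2 [le_j A1 A2 <-]]]].
  by exists j.+1, k1.+1, k2; split => //; exact: align_ins.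
- case: s1 => [/= ->|a' s1 [-> /IH [j [k1 [k2 [le_j A1 A2 <-]]]]]].
    exists 0, 0, (k' + (a != b)); rewrite take0 drop0.
    by split => //; [exact: align_nil | exact: align_sub].
  by exists j.+1, (k1 + (a != b)), k2; split => //=; [exact: align_sub | lia].
Qed.

Lemma align_trans s t u k1 k2 :
  align s t k1 -> align t u k2 -> exists2 k, k <= k1 + k2 & align s u k.
Proof.
have neq_trans a b c : (a != c) <= (a != b) + (b != c).
  by case: (a =P b) => [->|/eqP/negPf ab]; rewrite ?eqxx ?ab //=; case: (_ != _).
(* Induction on the total length: composing may consume a letter of either alignment. *)
move: {2}(size s + size t + size u) (leqnn (size s + size t + size u)) => N.
elim: N s t u k1 k2 => [|N IH] s t u k1 k2 le_N A1 A2.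
  case: s t u le_N A1 A2 => // [] [] // [] // _ A1 A2.
  by exists 0 => //; exact: align_nil.
inversion A1 as [|a s' t' k1' A1'|b s' t' k1' A1'|a b s' t' k1' A1']; subst.
- by exists k2.
- have /= [k le_k A] := IH s' t u k1' k2 ltac:(simpl in *; lia) A1' A2.
  by exists k.+1; [lia | exact: align_del].
- inversion A2 as [|b' t'' u' k2' A2'|c t'' u' k2' A2'|b' c t'' u' k2' A2']; subst.
  + have /= [k le_k A] := IH s t' u k1' k2' ltac:(simpl in *; lia) A1' A2'.
    by exists k; [lia | done].
  + have /= [k le_k A] := IH s (b :: t') u' k1'.+1 k2' ltac:(simpl in *; lia) A1 A2'.
    by exists k.+1; [lia | exact: align_ins].
  + have /= [k le_k A] := IH s t' u' k1' k2' ltac:(simpl in *; lia) A1' A2'.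
    by exists k.+1; [lia | exact: align_ins].
- inversion A2 as [|b' t'' u' k2' A2'|c t'' u' k2' A2'|b' c t'' u' k2' A2']; subst.
  + have /= [k le_k A] := IH s' t' u k1' k2' ltac:(simpl in *; lia) A1' A2'.
    by exists k.+1; [lia | exact: align_del].
  + have /= [k le_k A] :=
      IH (a :: s') (b :: t') u' (k1' + (a != b)) k2' ltac:(simpl in *; lia) A1 A2'.
    by exists k.+1; [lia | exact: align_ins].
  + have /= [k le_k A] := IH s' t' u' k1' k2' ltac:(simpl in *; lia) A1' A2'.
    exists (k + (a != c)); last exact: align_sub.
    by have := neq_trans a b c; lia.
Qed.

End Alignment.

Section EditDistance.
Variable T : eqType.
Implicit Types s t u : seq T.

Lemma ED_sym s t : ED s t = ED t s.
Proof.
by apply/eqP; rewrite eqn_leq !ED_le_align //; apply/align_sym/align_ED.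
Qed.

Lemma ED_triangle s t u : ED s u <= ED s t + ED t u.
Proof.
have [k le_k A] := align_trans (align_ED s t) (align_ED t u).
exact: leq_trans (ED_le_align A) le_k.
Qed.

Lemma ED_cat s1 s2 t1 t2 : ED (s1 ++ s2) (t1 ++ t2) <= ED s1 t1 + ED s2 t2.
Proof. exact/ED_le_align/align_cat/align_ED/align_ED. Qed.

Lemma EDss s : ED s s = 0.
Proof. by apply/eqP; rewrite -leqn0; apply/ED_le_align/align_refl. Qed.

Lemma dist_size_le_ED s t : `|size s - size t| <= ED s t.
Proof. by have [] := align_size (align_ED s t); lia. Qed.

Lemma ED_split s1 s2 t : exists2 j, j <= size t &
  ED s1 (take j t) + ED s2 (drop j t) <= ED (s1 ++ s2) t.
Proof.
have [j [k1 [k2 [le_j A1 A2 <-]]]] := align_split (align_ED (s1 ++ s2) t).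
by exists j => //; apply: leq_add; exact: ED_le_align.
Qed.

Lemma ED_shift_cat s t u : ED (s ++ t) (t ++ u) <= size s + size u.
Proof.
have := ED_cat s t [::] (t ++ u); rewrite /= EDs0.
have := ED_cat t [::] t u; rewrite cats0 EDss /=; lia.
Qed.

Lemma ED_flatten_nseq d s t : ED (flatten (nseq d s)) (flatten (nseq d t)) <= d * ED s t.
Proof. by elim: d => //= d IH; rewrite mulSn (leq_trans (ED_cat _ _ _ _)) ?leq_add2l. Qed.

Definition slice s i j := take (j - i) (drop i s).

Lemma ED_split_flatten_nseq m s r t : exists y : nat -> nat,
  [/\ y 0 = 0, forall i, y i <= y i.+1, forall i, y i <= size t &
   \sum_(0 <= i < m) ED s (slice t (y i) (y i.+1)) + ED r (drop (y m) t)
     <= ED (flatten (nseq m s) ++ r) t].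
Proof.
elim: m t => [|m IH] t.
  by exists (fun=> 0); split => //; rewrite big_geq // drop0.
rewrite /= -catA; have [j le_j split_j] := ED_split s (flatten (nseq m s) ++ r) t.
have [y [y0 y_step y_le sum_y]] := IH (drop j t).
exists (fun i => if i is i'.+1 then j + y i' else 0); split => //.
- by case=> //= i; rewrite leq_add2l.
- by case=> //= i; rewrite size_drop in y_le; have := y_le i; lia.
rewrite big_nat_recl //= y0 addn0 /slice subn0 drop0.
under eq_bigr => i _ do rewrite subnDl addnC -drop_drop.
by rewrite [j + y m]addnC -drop_drop; move: sum_y split_j; rewrite /slice; lia.
Qed.

End EditDistance.

Lemma minn_absz_modz_le (s : int) (m : nat) :
  minn `|(s %% m%:Z)%Z|%N (m - `|(s %% m%:Z)%Z|%N) <= `|s|%N.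
Proof.
case: m => [|m]; first by rewrite modz0 sub0n minn0.
have := divz_eq s m.+1; have := modz_ge0 s (isT : m.+1%:Z != 0)%R.
have := ltz_pmod s (isT : (0 < m.+1%:Z)%R).
move: (s %/ m.+1)%Z (s %% m.+1)%Z => q k k_lt k_ge0 ->.
by case: (ltP q 0%R) => q_sgn; nia.
Qed.

Section Rotations.
Variables (T : eqType) (Q : seq T).

Lemma flatten_nseq_rot k d :
  flatten (nseq d.+1 (rot k Q)) = drop k Q ++ flatten (nseq d Q) ++ take k Q.
Proof.
elim: d => [|d IH]; first by rewrite /= !cats0.
by rewrite /= in IH *; rewrite IH /rot -!catA (catA (take k Q)) cat_take_drop.
Qed.

Lemma ED_flatten_nseq_rot k d :
  ED (flatten (nseq d (rot k Q))) (flatten (nseq d Q)) <= 2 * minn k (size Q - k).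
Proof.
case: d => [|d]; first by rewrite EDss.
rewrite flatten_nseq_rot; set Qd := flatten (nseq d Q).
have QdE : flatten (nseq d.+1 Q) = take k Q ++ drop k Q ++ Qd by rewrite catA cat_take_drop.
have QdE' : flatten (nseq d.+1 Q) = (Qd ++ take k Q) ++ drop k Q.
  by rewrite -catA cat_take_drop -[d.+1]addn1 nseqD flatten_cat /= cats0.
have := ED_shift_cat (drop k Q) (Qd ++ take k Q) (drop k Q); rewrite -QdE' size_drop.
have := ED_shift_cat (take k Q) (drop k Q ++ Qd) (take k Q).
rewrite -QdE ED_sym size_take_min -catA; lia.
Qed.

Lemma ED_flatten_nseq_crot d s :
  ED (flatten (nseq d (crot Q s))) (flatten (nseq d Q)) <= 2 * `|s|%N.
Proof.
apply: leq_trans (ED_flatten_nseq_rot _ _) _.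
by rewrite leq_mul2l minn_absz_modz_le orbT.
Qed.

End Rotations.

Section PeriodicStrings.
Variables (T : eqType) (Q : seq T).
Local Notation p := (size Q).

Lemma inf_prefix_cat n : 0 < p ->
  inf_prefix Q n = flatten (nseq (n %/ p) Q) ++ take (n %% p) Q.
Proof.
move=> p_gt0; have r_lt_p : n %% p < p by rewrite ltn_pmod.
rewrite /inf_prefix; have -> : n.+1 = n %/ p + (n - n %/ p).+1 by have := leq_div n p; lia.
rewrite nseqD flatten_cat take_cat size_flatten /shape map_nseq sumn_nseq /=.
have -> : n - p * (n %/ p) = n %% p by rewrite {1}(divn_eq n p) mulnC addKn.
by rewrite ltnNge mulnC leq_trunc_div /= takel_cat // ltnW.
Qed.

Variable x0 : T.

(* [inf_factor a l] is Q^*[a..a+l); the default [x0] is only read when Q is empty. *)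
Definition inf_factor a l := mkseq (fun i => nth x0 Q ((a + i) %% p)) l.

Lemma size_inf_factor a l : size (inf_factor a l) = l.
Proof. exact: size_mkseq. Qed.

Lemma inf_factor_cat a l1 l2 :
  inf_factor a (l1 + l2) = inf_factor a l1 ++ inf_factor (a + l1) l2.
Proof.
apply: (@eq_from_nth _ x0) => [|i]; first by rewrite size_cat !size_inf_factor.
rewrite size_inf_factor => lt_i; rewrite nth_cat size_inf_factor nth_mkseq //.
case: ltnP => i_l1; rewrite nth_mkseq //; last lia.
by congr (nth _ _ (_ %% _)); lia.
Qed.

Lemma inf_factor_period a k l : inf_factor (a + k * p) l = inf_factor a l.
Proof. by apply: eq_mkseq => i; rewrite addnAC addnC modnMDl. Qed.

Lemma take_inf_factor j a l : take j (inf_factor a l) = inf_factor a (minn j l).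
Proof.
apply: (@eq_from_nth _ x0) => [|i]; first by rewrite size_take_min !size_inf_factor.
rewrite size_take_min size_inf_factor => lt_i.
rewrite nth_take; last lia.
by rewrite /inf_factor !nth_mkseq //; lia.
Qed.

Lemma drop_inf_factor j a l : drop j (inf_factor a l) = inf_factor (a + j) (l - j).
Proof.
apply: (@eq_from_nth _ x0) => [|i]; first by rewrite size_drop !size_inf_factor.
rewrite size_drop size_inf_factor => lt_i.
by rewrite nth_drop /inf_factor !nth_mkseq ?addnA //; lia.
Qed.

Lemma inf_factor_rot a : inf_factor a p = rot (a %% p) Q.
Proof.
apply: (@eq_from_nth _ x0) => [|i]; first by rewrite size_rot size_inf_factor.
rewrite size_inf_factor => lt_i; rewrite nth_mkseq // /rot nth_cat size_drop -modnDml.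
have lt_a : a %% p < p by rewrite ltn_pmod //; lia.
case: ltnP => i_lt; first by rewrite nth_drop modn_small //; lia.
have -> : a %% p + i = (a %% p + i - p) + p by lia.
by rewrite modnDr modn_small ?nth_take; [congr nth; lia | lia | lia].
Qed.

Lemma inf_factor0p : inf_factor 0 p = Q.
Proof. by rewrite inf_factor_rot mod0n rot0. Qed.

Lemma take_inf_factorMp m r : r <= p -> take r Q = inf_factor (m * p) r.
Proof.
move=> le_r; rewrite -{1}inf_factor0p take_inf_factor (minn_idPl le_r).
by rewrite -[m * p]add0n inf_factor_period.
Qed.

Lemma flatten_nseq_inf_factor d : flatten (nseq d Q) = inf_factor 0 (d * p).
Proof.
elim: d => // d IH; rewrite /= IH mulSn inf_factor_cat inf_factor0p.
by rewrite -(inf_factor_period 0 1) mul1n.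
Qed.

Lemma inf_prefix_factor n : 0 < p -> inf_prefix Q n = inf_factor 0 n.
Proof.
move=> p_gt0; rewrite inf_prefix_cat // flatten_nseq_inf_factor.
have r_le_p : n %% p <= p := ltnW (ltn_pmod n p_gt0).
by rewrite (take_inf_factorMp (n %/ p)) // -inf_factor_cat -divn_eq.
Qed.

Lemma ED_inf_factor_size a l1 l2 : ED (inf_factor a l1) (inf_factor a l2) <= `|l1 - l2|.
Proof.
wlog le_l : l1 l2 / l1 <= l2 => [hwlog|].
  by case: (leqP l1 l2) => [/hwlog //|/ltnW/hwlog]; rewrite ED_sym; lia.
rewrite -(subnKC le_l) inf_factor_cat.
have := ED_shift_cat [::] (inf_factor a l1) (inf_factor (a + l1) (l2 - l1)).
by rewrite /= size_inf_factor; lia.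
Qed.

Lemma ED_inf_factor_start a b e : a <= e -> b <= e ->
  ED (inf_factor a (e - a)) (inf_factor b (e - b)) <= `|a - b|.
Proof.
wlog le_ab : a b / a <= b => [hwlog le_a le_b|le_a le_b].
  case: (leqP a b) => [/hwlog|/ltnW/hwlog/(_ le_b le_a)]; first exact.
  by rewrite ED_sym; lia.
have -> : e - a = (b - a) + (e - b) by lia.
rewrite inf_factor_cat subnKC //.
have := ED_shift_cat (inf_factor a (b - a)) (inf_factor b (e - b)) [::].
by rewrite /= cats0 size_inf_factor; lia.
Qed.

Lemma crot_inf_factor a i : 0 < p -> crot Q (a%:Z - (i * p)%:Z)%R = inf_factor a p.
Proof.
move=> p_gt0; rewrite /crot inf_factor_rot; congr rot.
by rewrite PoszM -mulNr addrC modzMDl modz_nat.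
Qed.

Lemma ED_crot_le_inf_factor (P : seq T) a i l : size P = p -> 0 < p ->
  ED P (crot Q (a%:Z - (i * p)%:Z)%R) <= 2 * ED P (inf_factor a l).
Proof.
move=> sizeP p_gt0; rewrite crot_inf_factor //.
have := ED_triangle P (inf_factor a l) (inf_factor a p).
have := ED_inf_factor_size a l p; have := dist_size_le_ED P (inf_factor a l).
by rewrite size_inf_factor sizeP; lia.
Qed.

Lemma ED_take_le_inf_factor (R : seq T) m r a :
    size R = r -> r <= p -> a <= m * p + r ->
  ED R (take r Q) <= 2 * ED R (inf_factor a (m * p + r - a)).
Proof.
move=> sizeR le_r le_a; rewrite (take_inf_factorMp m) //.
have := ED_triangle R (inf_factor a (m * p + r - a)) (inf_factor (m * p) r).
have := ED_inf_factor_start le_a (leq_addr r (m * p)); rewrite addKn.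
have := dist_size_le_ED R (inf_factor a (m * p + r - a)).
by rewrite size_inf_factor sizeR; lia.
Qed.

End PeriodicStrings.

Lemma exists_argmin (A : Type) (f : A -> nat) (a : A) : exists m, forall b, f m <= f b.
Proof.
move: {2}(f a) (leqnn (f a)) => N; elim: N a => [|N IH] a le_a.
  by exists a => b; apply: leq_trans le_a _.
have [[b lt_b]|no_lt] := classic (exists b, f b < f a).
  by apply: (IH b); lia.
by exists a => b; rewrite leqNgt; apply/negP => lt_b; apply: no_lt; exists b.
Qed.

Lemma leq_sum_nat m n (F G : nat -> nat) :
  (forall i, m <= i < n -> F i <= G i) -> \sum_(m <= i < n) F i <= \sum_(m <= i < n) G i.
Proof.
by move=> le_FG; rewrite big_nat_cond [X in _ <= X]big_nat_cond; apply: leq_sum => i /andP[/le_FG].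
Qed.

Lemma exists_le_avg (f : nat -> nat) d : exists2 i, i <= d & d * f i <= \sum_(0 <= j < d) f j.
Proof.
elim: d => [|d [i le_i le_avg]]; first by exists 0.
rewrite big_nat_recr //=; case: (leqP (f d) (f i)) => [le_f|lt_f].
  by exists d => //; rewrite mulSn; have := leq_mul (leqnn d) le_f; lia.
by exists i; [lia | rewrite mulSn; lia].
Qed.

Lemma absz_telescope (g : nat -> int) i j : i <= j ->
  `|(g j - g i)%R|%N <= \sum_(i <= k < j) `|(g k.+1 - g k)%R|%N.
Proof.
elim: j => [|j IH]; first by rewrite leqn0 => /eqP ->; rewrite subrr.
rewrite leq_eqVlt => /predU1P [->|le_ij]; first by rewrite subrr.
by have := IH le_ij; rewrite big_nat_recr //=; lia.
Qed.

(* In the application, [f j] is the cost of the j-th rotation, [c j] the cost of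
   the j-th block and [g j] the drift of its starting position. *)
Lemma exists_index_drift_le (f c : nat -> nat) (g : nat -> int) d e :
    g 0 = 0%R -> `|g d|%N <= e ->
    (forall j, j < d -> `|(g j.+1 - g j)%R|%N <= c j) ->
    (forall j, j < d -> f j <= 2 * c j) ->
  exists i, d * f i + 2 * `|g i|%N <= 3 * \sum_(0 <= j < d) c j + e.
Proof.
move=> g0 gd_le drift_le f_le.
have [i le_i avg_i] := exists_le_avg f d.
exists i.
have sum_f : \sum_(0 <= j < d) f j <= \sum_(0 <= j < d) 2 * c j.
  by apply: leq_sum_nat => j /andP[_ /f_le].
have sum_drift : \sum_(0 <= j < d) `|(g j.+1 - g j)%R|%N <= \sum_(0 <= j < d) c j.
  by apply: leq_sum_nat => j /andP[_ /drift_le].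
have := absz_telescope g (leq0n i); have := absz_telescope g le_i.
rewrite g0 subr0 -big_distrr /= in sum_f *.
rewrite (big_cat_nat (leq0n i) le_i) /= in sum_drift.
lia.
Qed.

Section InfPrefixED.
Variables (T : eqType) (P Q : seq T).
Hypotheses (P_gt0 : 0 < size P) (sizePQ : size P = size Q).
Local Notation p := (size P).

Lemma ED_inf_prefix_le n s :
  ED (inf_prefix P n) (inf_prefix Q n) <=
  ED (take (n %% p) P) (take (n %% p) Q) + (n %/ p * ED P (crot Q s) + 2 * `|s|%N).
Proof.
rewrite !inf_prefix_cat -?sizePQ //; apply: leq_trans (ED_cat _ _ _ _) _.
rewrite addnC leq_add2l; set d := n %/ p.
have := ED_triangle (flatten (nseq d P)) (flatten (nseq d (crot Q s))) (flatten (nseq d Q)).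
have := ED_flatten_nseq d P (crot Q s); have := ED_flatten_nseq_crot Q d s.
lia.
Qed.

Lemma ED_inf_prefix_ge n : exists s : int,
  ED (take (n %% p) P) (take (n %% p) Q) + (n %/ p * ED P (crot Q s) + 2 * `|s|%N) <=
  3 * ED (inf_prefix P n) (inf_prefix Q n).
Proof.
have [x0 _] : exists x0 : T, True by case: P P_gt0 => // x0.
set d := n %/ p; set r := n %% p.
have n_eq : n = d * p + r := divn_eq n p.
have r_le : r <= p := ltnW (ltn_pmod n P_gt0).
rewrite [inf_prefix Q n](inf_prefix_factor x0) -?sizePQ //; set Y := inf_factor Q x0 0 n.
have [y [y0 y_step y_le split_le]] := ED_split_flatten_nseq d P (take r P) Y.
rewrite -inf_prefix_cat // size_inf_factor in split_le y_le.
have block j : slice Y (y j) (y j.+1) = inf_factor Q x0 (y j) (y j.+1 - y j).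
  rewrite /slice drop_inf_factor take_inf_factor add0n; congr inf_factor.
  by have := y_le j.+1; have := y_step j; lia.
have tail : drop (y d) Y = inf_factor Q x0 (y d) (d * p + r - y d).
  by rewrite drop_inf_factor add0n -n_eq.
pose drift i := ((y i)%:Z - (i * p)%:Z)%R.
have drift0 : drift 0 = 0%R by rewrite /drift y0.
have drift_tail : `|drift d|%N <= ED (take r P) (drop (y d) Y).
  have := dist_size_le_ED (take r P) (drop (y d) Y).
  by rewrite size_takel // tail size_inf_factor /drift; have := y_le d; lia.
have drift_step j : j < d -> `|(drift j.+1 - drift j)%R|%N <= ED P (slice Y (y j) (y j.+1)).
  move=> _; have := dist_size_le_ED P (slice Y (y j) (y j.+1)).
  by rewrite block size_inf_factor /drift mulSn; have := y_step j; lia.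
have crot_le j : j < d -> ED P (crot Q (drift j)) <= 2 * ED P (slice Y (y j) (y j.+1)).
  by move=> _; rewrite block /drift sizePQ; apply: ED_crot_le_inf_factor; rewrite -?sizePQ.
have [i cost_i] := exists_index_drift_le drift0 drift_tail drift_step crot_le.
exists (drift i).
have := @ED_take_le_inf_factor T Q x0 (take r P) d r (y d) (size_takel r_le).
by rewrite -sizePQ -tail -n_eq => /(_ r_le (y_le d)); lia.
Qed.

End InfPrefixED.

Theorem lemma5p4 (T : eqType) (P Q : seq T) (n : nat) :
  0 < size P -> size P = size Q -> 0 < n ->
  let p := size P in
  let d := n %/ p in
  let r := n %% p in
  let X := inf_prefix P n in
  let Y := inf_prefix Q n in
  let M := fun s : int => (ED (take r P) (take r Q) + (d * ED P (crot Q s) + 2 * `|s|%N))%N in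
  (forall s : int, ED X Y <= M s)%N /\
  (exists s0 : int, (forall s : int, M s0 <= M s)%N /\ (M s0 <= 3 * ED X Y)%N).
Proof.
(* The bounds also hold for n = 0. *)
move=> P_gt0 sizePQ _ p d r X Y M.
split=> [s|]; first exact: ED_inf_prefix_le.
have [s0 s0_min] := exists_argmin M 0.
exists s0; split=> //.
have [s le_s] := ED_inf_prefix_ge P_gt0 sizePQ n.
exact: leq_trans (s0_min s) le_s.
Qed.
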